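(* Let $X$ be a Cantor set with a compatible metric $d$, and let $\sigma$ be an aperiodic homeomorphism of $X$. Then $\sigma$ is chain transitive if and only if $\sigma$ is moving.
   Context: $\sigma$ is aperiodic if every $\sigma$-orbit is infinite. Given $\varepsilon>0$ and $x,y\in X$, an $\varepsilon$-chain from $x$ to $y$ is a finite sequence $x_0,x_1,\dots,x_n$ with $x_0=x$, $x_n=y$ and $d(\sigma(x_i),x_{i+1})<\varepsilon$ for $i=0,\dots,n-1$. $\sigma$ is chain transitive if for all $x,y\in X$ and every $\varepsilon>0$ there is an $\varepsilon$-chain from $x$ to $y$. $\sigma$ is moving if for every clopen set $E$ with $E\ne\emptyset$ and $E\ne X$, both $\sigma(E)\setminus E\ne\emptyset$ and $E\setminus\sigma(E)\ne\emptyset$. *)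

From HB Require Import structures.
From mathcomp Require Import all_boot all_order all_algebra.
From mathcomp Require Import all_classical all_reals all_analysis.
Set Implicit Arguments. Unset Strict Implicit. Unset Printing Implicit Defensive.
Import Order.TTheory GRing.Theory Num.Theory.
Local Open Scope classical_set_scope.
Local Open Scope ring_scope.

Definition is_metric {R : realType} {X : Type} (d : X -> X -> R) : Prop :=
  [/\ forall x y, d x y = 0 <-> x = y,
      forall x y, d x y = d y x &
      forall x y z, d x z <= d x y + d y z].

Definition compatible_metric {R : realType} {X : topologicalType}
  (d : X -> X -> R) : Prop :=
  is_metric d /\
  forall A : set X, open A <->
    (forall x, A x -> exists2 e : R, 0 < e & [set y | d x y < e] `<=` A).

Definition cantor_set (X : topologicalType) : Prop :=
  [set: X] !=set0 /\ cantor_like X.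

Definition homeomorphism {X : topologicalType} (s : X -> X) : Prop :=
  continuous s /\ exists t : X -> X, [/\ cancel s t, cancel t s & continuous t].

Definition orbit {X : Type} (s : X -> X) (x : X) : set X :=
  [set y | exists n : nat, iter n s x = y \/ iter n s y = x].

Definition aperiodic {X : Type} (s : X -> X) : Prop :=
  forall x, infinite_set (orbit s x).

Definition eps_chain {R : realType} {X : Type} (d : X -> X -> R) (s : X -> X)
  (eps : R) (x y : X) : Prop :=
  exists (n : nat) (f : nat -> X),
    [/\ f 0%N = x, f n = y &
        forall i : nat, (i < n)%N -> d (s (f i)) (f i.+1) < eps].

Definition chain_transitive {R : realType} {X : Type} (d : X -> X -> R)
  (s : X -> X) : Prop :=
  forall (x y : X) (eps : R), 0 < eps -> eps_chain d s eps x y.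

Definition moving {X : topologicalType} (s : X -> X) : Prop :=
  forall E : set X, clopen E -> E <> set0 -> E <> setT ->
    (s @` E) `\` E <> set0 /\ E `\` (s @` E) <> set0.

From mathcomp Require Import all_boot all_order all_algebra.
From mathcomp Require Import all_classical all_reals all_analysis.
From mathcomp Require Import lra.
Set Implicit Arguments. Unset Strict Implicit. Unset Printing Implicit Defensive.
Import Order.TTheory GRing.Theory Num.Theory.
Local Open Scope classical_set_scope.
Local Open Scope ring_scope.

(* Both properties are equivalent to: the only nonempty clopen set E with
   s(E) ⊆ E is X itself.  A chain starting in such an E cannot leave it once
   eps is below the margin separating the compact set E from its complement.
   Conversely, the set C of endpoints of eps-chains from x (of positive
   length) is open with closure inside s^-1(C); a clopen set squeezed between
   them is forward invariant, hence all of X, so every point is reachable. *)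

Section EpsChain.
Variables (R : realType) (X : Type) (d : X -> X -> R) (s : X -> X) (eps : R).

Lemma eps_chain_rcons x z y :
  eps_chain d s eps x z -> d (s z) y < eps -> eps_chain d s eps x y.
Proof.
move=> [n [f [f0 fn fs]]] zy.
exists n.+1, (fun i => if (i <= n)%N then f i else y); split => //=.
  by rewrite ltnn.
move=> i; rewrite ltnS => lein; rewrite lein.
case: leqP => [nlei|]; last exact: fs.
have -> : i = n by apply/eqP; rewrite eqn_leq lein nlei.
by rewrite fn.
Qed.

Lemma eps_chain_stable (E : set X) x y :
  (forall a b, E a -> d (s a) b < eps -> E b) ->
  E x -> eps_chain d s eps x y -> E y.
Proof.
move=> Estep Ex [n [f [f0 <- fs]]].
suff : forall i, (i <= n)%N -> E (f i) by apply.
elim=> [|i IH] lein; first by rewrite f0.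
by apply: (Estep (f i)); [exact/IH/ltnW | exact: fs].
Qed.

End EpsChain.

Section CompatibleMetric.
Variables (R : realType) (X : topologicalType) (d : X -> X -> R).
Hypothesis dX : compatible_metric d.

Lemma open_dball x e : open [set y | d x y < e].
Proof.
case: dX => -[_ _ dtri] ->; move=> y /= dxy.
exists (e - d x y); first by rewrite subr_gt0.
by move=> z /= dyz; have := dtri x y z; lra.
Qed.

Lemma nbhs_dball x e : 0 < e -> nbhs x [set y | d x y < e].
Proof.
move=> e0; apply: open_nbhs_nbhs; split; first exact: open_dball.
by case: dX => -[d0 _ _] _ /=; rewrite (proj2 (d0 x x) erefl).
Qed.

Lemma compact_open_margin (K O : set X) : compact K -> open O -> K `<=` O ->
  exists2 del : R, 0 < del & forall a b, K a -> d a b < del -> O b.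
Proof.
case: dX => -[_ _ dtri] dopen cK oO KO.
have : \forall del \near (0:R)^'+, K `<=` (fun a => forall b, d a b < del -> O b).
  apply: (iffLR (compact_near_coveringP K) cK) => x Kx.
  have [r r0 rO] := (iffLR (dopen O) oO) x (KO x Kx).
  exists ([set y | d x y < r / 2], [set del | del < r / 2]).
    by split; [apply: nbhs_dball; lra | apply: nbhs_right_lt; lra].
  case=> x' del [/= xx' delr] b x'b; apply: rO => /=.
  by have := dtri x x' b; lra.
move=> margin.
have [del [del0 Hdel]] := filter_ex (filterI (nbhs_right_gt (0:R)) margin).
by exists del => // a b Ka; exact: Hdel.
Qed.

End CompatibleMetric.

Section ZeroDimensional.
Variable X : topologicalType.
Hypotheses (cmpX : compact [set: X]) (hsdfX : hausdorff_space X)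
  (zdX : zero_dimensional X).

Lemma clopen_nbhs_subset x (O : set X) : open O -> O x ->
  exists C, [/\ clopen C, C x & C `<=` O].
Proof.
move=> oO Ox.
have [C [Cx cC] CO] := zero_dimensional_cvg hsdfX zdX cmpX
  (open_nbhs_nbhs (conj oO Ox)).
by exists C.
Qed.

Lemma clopen_between (K O : set X) : compact K -> open O -> K `<=` O ->
  exists E, [/\ clopen E, K `<=` E & E `<=` O].
Proof.
move=> cK oO KO.
pose F := filter_from [set D : set X | clopen D /\ D `<=` O]
  (fun D => [set E : set X | [/\ clopen E, E `<=` O & D `<=` E]]).
have FF : Filter F.
  apply: filter_from_filter.
    by exists set0; split; [exact: clopen0 | exact: sub0set].
  move=> D1 D2 [cD1 D1O] [cD2 D2O]; exists (D1 `|` D2).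
    by split; [exact: clopenU | move=> ? [/D1O|/D2O]].
  move=> E [cE EO DE]; split; split => //; apply: subset_trans DE.
    exact: subsetUl.
  exact: subsetUr.
have : \forall E \near F, K `<=` E.
  apply: (iffLR (compact_near_coveringP K) cK) => x Kx.
  have [C [cC Cx CO]] := clopen_nbhs_subset oO (KO x Kx).
  exists (C, [set E : set X | [/\ clopen E, E `<=` O & C `<=` E]]).
    by split; [apply: open_nbhs_nbhs; split => //; case: cC | exists C].
  by case=> x' E [/= Cx' [_ _ CE]]; exact: CE.
by move=> [E [cE EO] KE]; exists E; split => //; apply: KE; split.
Qed.

End ZeroDimensional.

Definition no_proper_invariant_clopen {X : topologicalType} (s : X -> X) :=
  forall E : set X, clopen E -> E !=set0 -> s @` E `<=` E -> E = setT.

Section Moving.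
Variables (X : topologicalType) (s : X -> X).

Lemma moving_no_proper_invariant_clopen :
  moving s -> no_proper_invariant_clopen s.
Proof.
move=> mv E cE [x Ex] sEE; apply: contrapT => ET.
have E0 : E <> set0 by move=> E0; rewrite E0 in Ex.
by apply: (mv E cE E0 ET).1; rewrite setD_eq0.
Qed.

Lemma no_proper_invariant_clopen_moving :
  injective s -> no_proper_invariant_clopen s -> moving s.
Proof.
move=> s_inj npic E cE E0 ET; rewrite !setD_eq0; split => [sEE | EsE].
  by apply: ET; apply: npic => //; apply/set0P/eqP.
have sCE : s @` (~` E) `<=` ~` E.
  move=> _ [z nEz <-] /EsE [w Ew swz].
  by apply: nEz; rewrite -(s_inj _ _ swz).
have CE0 : ~` E !=set0.
  by apply/set0P/eqP => CE0; apply: ET; rewrite -(setCK E) CE0 setC0.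
have := npic _ (clopenC E cE) CE0 sCE.
by move/(congr1 setC); rewrite setCK setCT.
Qed.

End Moving.

Section ChainTransitive.
Variables (R : realType) (X : topologicalType) (d : X -> X -> R) (s : X -> X).
Hypotheses (cmpX : compact [set: X]) (dX : compatible_metric d).

Lemma chain_transitive_no_proper_invariant_clopen :
  chain_transitive d s -> no_proper_invariant_clopen s.
Proof.
move=> ct E [oE clE] [x Ex] sEE; apply/seteqP; split => // y _.
have cE : compact E := subclosed_compact clE cmpX (@subsetT _ E).
have [del del0 Emargin] := compact_open_margin dX cE oE (@subset_refl _ E).
apply: (eps_chain_stable _ Ex (ct x y del del0)) => a b Ea.
by apply: Emargin; apply: sEE; exists a.
Qed.

Lemma no_proper_invariant_clopen_chain_transitive (t : X -> X) :
  hausdorff_space X -> zero_dimensional X -> continuous s -> cancel t s ->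
  no_proper_invariant_clopen s -> chain_transitive d s.
Proof.
move=> hsdfX zdX s_cont ts npic x y eps eps0.
have [[d0 dsym dtri] dopen] := dX.
pose C := [set w | exists2 z, eps_chain d s eps x z & d (s z) w < eps].
have CR w : C w -> eps_chain d s eps x w by case=> z; exact: eps_chain_rcons.
have oC : open C.
  apply/dopen => w [z xz zw]; exists (eps - d (s z) w); first by rewrite subr_gt0.
  by move=> v /= wv; exists z => //; have := dtri (s z) w v; lra.
have Csx : C (s x).
  exists x; first by exists 0%N, (fun=> x).
  by rewrite (proj2 (d0 _ _) erefl).
have clC_sub : closure C `<=` s @^-1` C.
  move=> w; rewrite closureEnbhs => /= clw.
  have [v [Cv /= swv]] := clw C _ (fun _ h => h)
    (s_cont w _ (nbhs_dball dX (s w) eps0)).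
  by exists v; [exact: CR | rewrite dsym].
have cclC : compact (closure C).
  exact: subclosed_compact (@closed_closure _ C) cmpX (@subsetT _ _).
have [E [cE CE EC]] := clopen_between cmpX hsdfX zdX cclC
  (open_comp (fun w _ => s_cont w) oC) clC_sub.
have ET : E = setT.
  apply: npic => //; first by exists (s x); apply/CE/subset_closure.
  by move=> _ [e /EC Cse <-]; apply/CE/subset_closure.
by rewrite -(ts y); apply/CR/EC; rewrite ET.
Qed.

End ChainTransitive.

Theorem theorem10p3 (R : realType) (X : topologicalType) (d : X -> X -> R)
  (s : X -> X) :
  cantor_set X -> compatible_metric d -> homeomorphism s -> aperiodic s ->
  (chain_transitive d s <-> moving s).
Proof.
move=> [_ [_ cmpX hsdfX zdX]] dX [s_cont [t [st ts _]]] _.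
split => [ct | mv].
- apply: no_proper_invariant_clopen_moving (can_inj st) _.
  exact: chain_transitive_no_proper_invariant_clopen ct.
- apply: no_proper_invariant_clopen_chain_transitive hsdfX zdX s_cont ts _ => //.
  exact: moving_no_proper_invariant_clopen.
Qed.
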